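(* Let $\mathscr H$ be a separable complex Hilbert space, $d\ge1$ an integer, and let $F=(F_{ij})_{0\le i,j\le d}$ be a matrix of operators in $\mathscr H$, with $F_{00}=K$, $F_{i0}=R_i$, $F_{0j}=N_j$ ($i,j\ge1$), satisfying Hypothesis (C) below. Then: (1) $\mathrm{Dom}(R_k)\supset \mathrm{Dom}(K)\cup\mathrm{Dom}(K^* )$ and $\mathrm{Dom}(N_k^* )\supset\mathrm{Dom}(K)\cup\mathrm{Dom}(K^* )$ for all $k\ge1$. (2) $\mathrm{Dom}(F)=\mathrm{Dom}(K)$; moreover $2\mathrm{Re}\langle Ku|u\rangle=-\sum_{k\ge1}\|R_ku\|^2$ for all $u\in\mathrm{Dom}(K)$ and $2\mathrm{Re}\langle K^*v|v\rangle=-\sum_{k\ge1}\|N_k^*v\|^2$ for all $v\in\mathrm{Dom}(K^* )$. (3) For all $u\in\mathrm{Dom}(K)\cup\mathrm{Dom}(K^* )$ and all $i\ge1$: $N_i^*u=-\sum_{k\ge1}S_{ki}^*R_ku$ and $R_iu=-\sum_{k\ge1}S_{ik}N_k^*u$. (4) For all $u\in\mathrm{Dom}(K)$ and $i=1,\dots,d$: $N_iu=-\sum_{k\ge1}R_k^*S_{ki}u$. (5) For every choice of $u_0,\dots,u_d\in\mathrm{Dom}(F)$ and $v_0,\dots,v_d\in\widetilde D$, \[\sum_{i,j\ge0}\Big(\langle u_i|F_{ij}u_j\rangle+\langle F_{ji}u_i|u_j\rangle+\sum_{k\ge1}\langle F_{ki}u_i|F_{kj}u_j\rangle\Big)=0,\]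 \[\sum_{i,j\ge0}\Big(\langle v_i|F_{ji}^*v_j\rangle+\langle F_{ij}^*v_i|v_j\rangle+\sum_{k\ge1}\langle F_{ik}^*v_i|F_{jk}^*v_j\rangle\Big)=0.\]
   Context: Hypothesis (C): (i) each $F_{ij}$ is a closed operator in $\mathscr H$; set $\mathrm{Dom}(F)=\bigcap_{i,j\ge0}\mathrm{Dom}(F_{ij})$ and $\mathrm{Dom}(F^* )=\bigcap_{i,j\ge0}\mathrm{Dom}(F_{ji}^* )$. (ii) For $1\le i,j\le d$, $F_{ij}=S_{ij}-\delta_{ij}\mathbb 1$, where the $S_{ij}$ are bounded operators with $\sum_{k=1}^dS_{ki}^*S_{kj}=\sum_{k=1}^dS_{ik}S_{jk}^*=\delta_{ij}\mathbb 1$. (iii) There is a dense subspace $D$ which is a core for $K,R_i,N_i$ ($i=1,\dots,d$) and a dense subspace $\widetilde D$ which is a core for $K^*,R_i^*,N_i^*$ ($i=1,\dots,d$). (iv) $\mathrm{Dom}(N_i^* )\supset D\cup\widetilde D$, $\mathrm{Dom}(R_i)\supset D\cup\widetilde D$, $\mathrm{Dom}(N_i)\supset\mathrm{Dom}(K)$ for all $i\ge1$. (v) For all $k,i\ge1$ and $u\in\mathrm{Dom}(K)$: $S_{ki}u\in\mathrm{Dom}(R_k^* )$. (vi) $K$ and $K^*$ are generators of strongly continuous contraction semigroups on $\mathscr H$, and $2\mathrm{Re}\langle Ku|u\rangle=-\sum_{k\ge1}\|R_ku\|^2$ for all $u\in D$, $2\mathrm{Re}\langle K^*v|v\rangle=-\sum_{k\ge1}\|N_k^*v\|^2$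 for all $v\in\widetilde D$. (vii) $N_i^*u=-\sum_{k\ge1}S_{ki}^*R_ku$ for all $u\in D\cup\widetilde D$, $i\ge1$. (viii) There exist a positive self-adjoint operator $C$ on $\mathscr H$ and constants $\delta>0$, $b_1,b_2\ge0$ with $\mathrm{Dom}(C^{1/2})\subset\mathrm{Dom}(F)$ such that, with $C_\epsilon:=C(1+\epsilon C)^{-2}$: (a) for each $\epsilon\in(0,\delta)$ there is a dense subspace $D_\epsilon\subset\widetilde D$ with $C_\epsilon^{1/2}D_\epsilon\subset\widetilde D$ and each $F_{ij}^*C_\epsilon^{1/2}|_{D_\epsilon}$ bounded; (b) for all $\epsilon\in(0,\delta)$ and $u_0,\dots,u_d\in\mathrm{Dom}(F)$, $\sum_{i,j\ge0}\big(\langle u_i|C_\epsilon F_{ij}u_j\rangle+\langle F_{ji}u_i|C_\epsilon u_j\rangle+\sum_{k\ge1}\langle F_{ki}u_i|C_\epsilon F_{kj}u_j\rangle\big)\le\sum_{i\ge0}\big(b_1\langle u_i|C_\epsilon u_i\rangle+b_2\|u_i\|^2\big)$. *)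

From mathcomp Require Import all_boot all_order all_algebra.
From mathcomp.reals Require Import reals.
From mathcomp.real_closed Require Import complex.
From Stdlib Require Import ClassicalEpsilon.
Set Implicit Arguments. Unset Strict Implicit. Unset Printing Implicit Defensive.
Import Order.TTheory GRing.Theory Num.Theory.
Local Open Scope ring_scope.
Local Open Scope complex_scope.

Record op (V : Type) := Op { dom : V -> Prop; app : V -> V }.
Arguments Op {V}.
Arguments dom {V}.
Arguments app {V}.

Definition tot {V : Type} (f : V -> V) : op V := Op (fun _ => True) f.

Definition subsetV {V : Type} (A B : V -> Prop) := forall x, A x -> B x.

Section Hilbert.
Variables (R : realType) (V : lmodType R[i]).
(* ip u v = <u|v>, antilinear in u, linear in v *)
Variable ip : V -> V -> R[i].

Definition hnorm (u : V) : R := Num.sqrt (complex.Re (ip u u)).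

Definition inner_product : Prop :=
  [/\ (forall (a : R[i]) u v w, ip u (a *: v + w) = a * ip u v + ip u w),
      (forall u v, ip v u = (ip u v)^*),
      (forall u, 0 <= ip u u) &
      (forall u, ip u u = 0 -> u = 0)].

Definition cvgV (x : nat -> V) (l : V) : Prop :=
  forall e : R, 0 < e -> exists N, forall n, (N <= n)%N -> hnorm (x n - l) < e.

Definition cauchyV (x : nat -> V) : Prop :=
  forall e : R, 0 < e -> exists N, forall n m, (N <= n)%N -> (N <= m)%N ->
    hnorm (x n - x m) < e.

Definition dense (S : V -> Prop) : Prop :=
  forall u (e : R), 0 < e -> exists w, S w /\ hnorm (u - w) < e.

Definition is_hilbert : Prop :=
  [/\ inner_product,
      (forall x, cauchyV x -> exists l, cvgV x l) &
      (exists s : nat -> V, dense (fun w => exists n, w = s n))].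

Definition subspace (S : V -> Prop) : Prop :=
  S 0 /\ forall (a : R[i]) u v, S u -> S v -> S (a *: u + v).

Definition linear_on (S : V -> Prop) (f : V -> V) : Prop :=
  forall (a : R[i]) u v, S u -> S v -> f (a *: u + v) = a *: f u + f v.

Definition is_op (A : op V) : Prop := subspace (dom A) /\ linear_on (dom A) (app A).

Definition closed_op (A : op V) : Prop :=
  is_op A /\
  forall (x : nat -> V) u w, (forall n, dom A (x n)) -> cvgV x u ->
    cvgV (fun n => app A (x n)) w -> dom A u /\ app A u = w.

Definition bounded (f : V -> V) : Prop :=
  linear_on (fun _ => True) f /\ exists M : R, forall u, hnorm (f u) <= M * hnorm u.

Definition adj_dom (A : op V) (v : V) : Prop :=
  exists w, forall u, dom A u -> ip v (app A u) = ip w u.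
Definition adj (A : op V) : op V :=
  Op (adj_dom A)
     (fun v => epsilon (inhabits 0)
        (fun w => forall u, dom A u -> ip v (app A u) = ip w u)).

Definition is_core (D : V -> Prop) (A : op V) : Prop :=
  subsetV D (dom A) /\
  forall u, dom A u -> exists x : nat -> V,
    [/\ forall n, D (x n), cvgV x u & cvgV (fun n => app A (x n)) (app A u)].

Definition rlim0 (f : R -> V) (l : V) : Prop :=
  forall e : R, 0 < e -> exists del : R, 0 < del /\
    forall t : R, 0 < t -> t < del -> hnorm (f t - l) < e.

Definition contraction_generator (A : op V) : Prop :=
  exists T : R -> V -> V,
  [/\ (forall t, 0 <= t -> bounded (T t) /\ forall u, hnorm (T t u) <= hnorm u)
         /\ (forall u, T 0 u = u),
      forall s t u, 0 <= s -> 0 <= t -> T (s + t) u = T s (T t u),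
      forall u, rlim0 (fun t => T t u) u,
      forall u, dom A u <-> exists w, rlim0 (fun t => (t^-1)%:C *: (T t u - u)) w &
      forall u, dom A u -> rlim0 (fun t => (t^-1)%:C *: (T t u - u)) (app A u)].

Definition self_adjoint (A : op V) : Prop :=
  [/\ is_op A, dense (dom A),
      (forall v, dom (adj A) v <-> dom A v) &
      forall v, dom A v -> app (adj A) v = app A v].

Definition pos_self_adjoint (A : op V) : Prop :=
  self_adjoint A /\ forall u, dom A u -> 0 <= ip u (app A u).

Definition is_sqrt (B A : op V) : Prop :=
  [/\ pos_self_adjoint B,
      (forall u, dom A u <-> dom B u /\ dom B (app B u)) &
      forall u, dom A u -> app A u = app B (app B u)].

(* resolvent-type operator (1 + e A)^{-1} *)
Definition res1 (A : op V) (e : R) (u : V) : V :=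
  epsilon (inhabits 0) (fun w => dom A w /\ w + e%:C *: app A w = u).

(* C_eps := C (1 + eps C)^{-2}, a bounded everywhere defined operator *)
Definition Ceps (C : op V) (e : R) : op V :=
  tot (fun u => app C (res1 C e (res1 C e u))).

End Hilbert.

From mathcomp Require Import all_boot all_order all_algebra.
From mathcomp.reals Require Import reals.
From mathcomp.real_closed Require Import complex.
From mathcomp Require Import ring lra.
From Stdlib Require Import ClassicalEpsilon.
Import Order.TTheory GRing.Theory Num.Theory.
Set Implicit Arguments. Unset Strict Implicit. Unset Printing Implicit Defensive.
Local Open Scope ring_scope.
Local Open Scope complex_scope.

(* Relative boundedness drives (1)-(3).  On the core D the dissipation identity gives
   ||R_k u|| <= ||K u|| + ||u||, and (vii) then bounds N_k^* u by the same quantity; on the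
   core D~ the roles are exchanged, using the inversion R_i = - sum_k S_ik N_k^* of (vii)
   that follows from sum_k S_ik S_jk^* = delta_ij.  As R_k and N_k^* are closed, a graph
   approximation of u in Dom K (or Dom K^* ) by the core makes R_k and N_k^* converge as
   well, so u lies in their domains and the identities of (2) and (3) pass to the limit.
   Testing against the dense set D~ turns (vii) into (4).  For (5) the form splits into its
   (i, j) entries: those with i, j >= 1 vanish by the isometry relation, those with one index
   0 by (4), and the (0, 0) entry by (2).  The second form is the first one for the matrix
   G_ij = F_ji^*, which satisfies the same relations with S_ij replaced by S_ji^*.
   The adjoints of the bounded S_ij exist by the Riesz representation theorem, proved here
   by minimising ||y||^2 - 2 Re f y over the complete space. *)

Section InnerProduct.
Variables (R : realType) (V : lmodType R[i]) (ip : V -> V -> R[i]).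
Hypothesis ip_inner : inner_product ip.
Local Notation nrm := (hnorm ip).

Lemma ipC u v : ip v u = conjc (ip u v).
Proof. by case: ip_inner. Qed.

Lemma ipDr u v w : ip u (v + w) = ip u v + ip u w.
Proof. by case: ip_inner => lin _ _ _; have := lin 1 u v w; rewrite scale1r mul1r. Qed.

Lemma ip0r u : ip u 0 = 0.
Proof. by apply: (@addrI _ (ip u 0)); rewrite -ipDr !addr0. Qed.

Lemma ipZr a u v : ip u (a *: v) = a * ip u v.
Proof. by case: ip_inner => lin _ _ _; have := lin a u v 0; rewrite !addr0 ip0r addr0. Qed.

Lemma ipDl u v w : ip (v + w) u = ip v u + ip w u.
Proof. by rewrite [LHS]ipC ipDr [ip v u]ipC [ip w u]ipC rmorphD. Qed.

Lemma ipZl a u v : ip (a *: v) u = conjc a * ip v u.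
Proof. by rewrite [LHS]ipC ipZr [ip v u]ipC rmorphM. Qed.

Lemma ip0l u : ip 0 u = 0.
Proof. by rewrite ipC ip0r rmorph0. Qed.

Lemma ipNr u v : ip u (- v) = - ip u v.
Proof. by rewrite -scaleN1r ipZr mulN1r. Qed.

Lemma ipNl u v : ip (- u) v = - ip u v.
Proof. by rewrite [LHS]ipC ipNr [ip u v]ipC rmorphN. Qed.

Lemma ipBr u v w : ip u (v - w) = ip u v - ip u w.
Proof. by rewrite ipDr ipNr. Qed.

Lemma ipBl u v w : ip (v - w) u = ip v u - ip w u.
Proof. by rewrite ipDl ipNl. Qed.

Lemma ip_sumr (I : Type) (r : seq I) (P : pred I) (f : I -> V) u :
  ip u (\sum_(i <- r | P i) f i) = \sum_(i <- r | P i) ip u (f i).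
Proof. exact: (big_morph _ (ipDr u) (ip0r u)). Qed.

Lemma ip_suml (I : Type) (r : seq I) (P : pred I) (f : I -> V) u :
  ip (\sum_(i <- r | P i) f i) u = \sum_(i <- r | P i) ip (f i) u.
Proof. exact: (big_morph _ (fun a b => ipDl u a b) (ip0l u)). Qed.

Lemma ip_ifr (b : bool) u v : ip u (if b then v else 0) = if b then ip u v else 0.
Proof. by case: b; rewrite ?ip0r. Qed.

Lemma ip_ifl (b : bool) u v : ip (if b then u else 0) v = if b then ip u v else 0.
Proof. by case: b; rewrite ?ip0l. Qed.

Lemma Re_ipC u v : complex.Re (ip v u) = complex.Re (ip u v).
Proof. by rewrite ipC; case: (ip u v). Qed.

Lemma ip_self u : ip u u = (nrm u ^+ 2)%:C.
Proof.
case: ip_inner => _ _ ge0 _; have := ge0 u; rewrite lecE /= => /andP[/eqP Im0 Re0].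
by rewrite sqr_sqrtr //; move: Im0; case: (ip u u) => a b /= ->.
Qed.

Lemma hnorm_ge0 u : 0 <= nrm u.
Proof. exact: sqrtr_ge0. Qed.

Lemma hnorm_sqr u : nrm u ^+ 2 = complex.Re (ip u u).
Proof. by rewrite ip_self. Qed.

Lemma hnorm_eq0 u : nrm u = 0 -> u = 0.
Proof.
by case: ip_inner => _ _ _ def0 nu0; apply: def0; rewrite ip_self nu0 expr0n.
Qed.

Lemma hnorm0 : nrm 0 = 0.
Proof. by rewrite /hnorm ip0r sqrtr0. Qed.

Lemma hnormN u : nrm (- u) = nrm u.
Proof. by rewrite /hnorm ipNl ipNr opprK. Qed.

Lemma hnormB u v : nrm (u - v) = nrm (v - u).
Proof. by rewrite -hnormN opprB. Qed.

Lemma conjcR (x : R) : conjc (x%:C) = x%:C.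
Proof. by rewrite /= oppr0. Qed.

Lemma Re_realM (x : R) (z : R[i]) : complex.Re (x%:C * z) = x * complex.Re z.
Proof. by case: z => ? ? /=; rewrite mul0r subr0. Qed.

Lemma hnorm_sqrZ (x : R) u : nrm (x%:C *: u) ^+ 2 = x ^+ 2 * nrm u ^+ 2.
Proof.
by rewrite !hnorm_sqr ipZl ipZr conjcR mulrA -rmorphM Re_realM expr2.
Qed.

Lemma Re_ip_comb (a b : R) u v :
  complex.Re (ip (a%:C *: u + b%:C *: v) (a%:C *: u + b%:C *: v))
  = a ^+ 2 * nrm u ^+ 2 + 2 * a * b * complex.Re (ip u v) + b ^+ 2 * nrm v ^+ 2.
Proof.
rewrite !ipDl !ipDr !ipZl !ipZr !conjcR !mulrA -!rmorphM !raddfD /= !Re_realM.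
by rewrite (Re_ipC u v) -!hnorm_sqr; ring.
Qed.

Lemma Re_ip_le u v : complex.Re (ip u v) <= nrm u * nrm v.
Proof.
have [/hnorm_eq0 ->|nu0] := eqVneq (nrm u) 0; first by rewrite ip0l hnorm0 mul0r.
have [/hnorm_eq0 ->|nv0] := eqVneq (nrm v) 0; first by rewrite ip0r hnorm0 mulr0.
have uv0 : 0 < nrm u * nrm v by rewrite mulr_gt0 // lt0r ?nu0 ?nv0 hnorm_ge0.
have := hnorm_ge0 ((nrm v)%:C *: u + (- nrm u)%:C *: v).
move/(exprn_ge0 2); rewrite hnorm_sqr Re_ip_comb => h.
suff : 0 <= (nrm u * nrm v) * (2 * (nrm u * nrm v - complex.Re (ip u v))).
  by rewrite pmulr_rge0 // pmulr_rge0 // subr_ge0.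
by move: h; set x := complex.Re _; set p := nrm u; set q := nrm v => h; nra.
Qed.

Lemma Re_ip_norm_le u v : `|complex.Re (ip u v)| <= nrm u * nrm v.
Proof.
rewrite ler_norml Re_ip_le andbT lerNl.
by have := Re_ip_le (- u) v; rewrite ipNl raddfN hnormN.
Qed.

Lemma hnormD u v : nrm (u + v) <= nrm u + nrm v.
Proof.
rewrite -ler_sqr ?nnegrE ?addr_ge0 ?hnorm_ge0 // hnorm_sqr ipDl !ipDr !raddfD /=.
rewrite (Re_ipC u v) -!hnorm_sqr; have := Re_ip_le u v; lra.
Qed.

Lemma hnorm_sum (I : Type) (r : seq I) (P : pred I) (f : I -> V) :
  nrm (\sum_(i <- r | P i) f i) <= \sum_(i <- r | P i) nrm (f i).
Proof.
elim/big_rec2: _ => [|i y z _ le_yz]; first by rewrite hnorm0.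
by rewrite (le_trans (hnormD _ _)) // lerD2l.
Qed.

End InnerProduct.

Section Convergence.
Variables (R : realType) (V : lmodType R[i]) (ip : V -> V -> R[i]).
Hypothesis ip_inner : inner_product ip.
Local Notation nrm := (hnorm ip).
Local Notation cvgV := (cvgV ip).

Definition cvgR (a : nat -> R) (l : R) :=
  forall e : R, 0 < e -> exists N, forall n, (N <= n)%N -> `|a n - l| < e.

Lemma cvgV_ext x y a : (forall n, x n = y n) -> cvgV x a -> cvgV y a.
Proof. by move=> xy xa e /xa[N aN]; exists N => n /aN; rewrite xy. Qed.

Lemma cvgV_cst a : cvgV (fun=> a) a.
Proof. by move=> e e0; exists 0%N => n _; rewrite subrr hnorm0. Qed.

Lemma cvgVD x y a b : cvgV x a -> cvgV y b -> cvgV (fun n => x n + y n) (a + b).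
Proof.
move=> xa yb e e0; have e2 : 0 < e / 2 by rewrite divr_gt0.
have [[N1 h1] [N2 h2]] := (xa _ e2, yb _ e2).
exists (maxn N1 N2) => n; rewrite geq_max => /andP[/h1 n1 /h2 n2].
rewrite opprD addrACA (le_lt_trans (hnormD ip_inner _ _)) //; lra.
Qed.

Lemma cvgVN x a : cvgV x a -> cvgV (fun n => - x n) (- a).
Proof. by move=> xa e /xa[N aN]; exists N => n /aN; rewrite -opprD hnormN. Qed.

Lemma cvgV_sum (I : Type) (r : seq I) (P : pred I) (x : I -> nat -> V) (a : I -> V) :
  (forall i, P i -> cvgV (x i) (a i)) ->
  cvgV (fun n => \sum_(i <- r | P i) x i n) (\sum_(i <- r | P i) a i).
Proof.
move=> xa; elim: r => [|j r IH].
  by rewrite big_nil; apply: cvgV_ext (cvgV_cst 0) => n; rewrite big_nil.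
rewrite big_cons; case: ifP => Pj; last by apply: cvgV_ext IH => n; rewrite big_cons Pj.
by apply: cvgV_ext (cvgVD (xa j Pj) IH) => n; rewrite big_cons Pj.
Qed.

Lemma cvgV_uniq x a b : cvgV x a -> cvgV x b -> a = b.
Proof.
move=> xa xb; apply/eqP; rewrite -subr_eq0; apply/eqP/(hnorm_eq0 ip_inner).
apply/eqP; rewrite eq_le hnorm_ge0 andbT; apply/ler_addgt0Pr => e e0.
have e2 : 0 < e / 2 by rewrite divr_gt0.
have [[N1 h1] [N2 h2]] := (xa _ e2, xb _ e2).
have := h1 _ (leq_maxl N1 N2); have := h2 _ (leq_maxr N1 N2).
have := hnormD ip_inner (x (maxn N1 N2) - b) (a - x (maxn N1 N2)).
rewrite addrC subrKA (hnormB ip_inner a (x _)); lra.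
Qed.

Lemma cvgV_cauchy x a : cvgV x a -> cauchyV ip x.
Proof.
move=> xa e e0; have e2 : 0 < e / 2 by rewrite divr_gt0.
have [N h] := xa _ e2; exists N => n m /h hn /h hm.
have := hnormD ip_inner (x n - a) (a - x m).
rewrite subrKA (hnormB ip_inner a (x _)); lra.
Qed.

Lemma cvgV_bounded (S : V -> V) x a : bounded ip S -> cvgV x a ->
  cvgV (fun n => S (x n)) (S a).
Proof.
move=> [S_lin [M SM]] xa e e0; have M1 : 0 < `|M| + 1 by rewrite ltr_pwDr.
have [N h] := xa _ (divr_gt0 e0 M1); exists N => n /h.
have -> : S (x n) - S a = S (x n - a).
  by have := S_lin (-1) a (x n) I I; rewrite !scaleN1r addrC => ->; rewrite addrC.
rewrite ltr_pdivlMr // => lt_e; apply: le_lt_trans (SM _) _.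
apply: le_lt_trans lt_e; rewrite mulrC; apply: ler_wpM2l; first exact: hnorm_ge0.
by rewrite (le_trans (ler_norm M)) // lerDl.
Qed.

Lemma cvgR_ext f g l : (forall n, f n = g n) -> cvgR f l -> cvgR g l.
Proof. by move=> fg fl e /fl[N lN]; exists N => n /lN; rewrite fg. Qed.

Lemma cvgR_cst c : cvgR (fun=> c) c.
Proof. by move=> e e0; exists 0%N => n _; rewrite subrr normr0. Qed.

Lemma cvgRD f g a b : cvgR f a -> cvgR g b -> cvgR (fun n => f n + g n) (a + b).
Proof.
move=> fa gb e e0; have e2 : 0 < e / 2 by rewrite divr_gt0.
have [[N1 h1] [N2 h2]] := (fa _ e2, gb _ e2).
exists (maxn N1 N2) => n; rewrite geq_max => /andP[/h1 n1 /h2 n2].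
rewrite opprD addrACA (le_lt_trans (ler_normD _ _)) //; lra.
Qed.

Lemma cvgRZ c f a : cvgR f a -> cvgR (fun n => c * f n) (c * a).
Proof.
move=> fa e e0; have c1 : 0 < `|c| + 1 by rewrite ltr_pwDr.
have [N h] := fa _ (divr_gt0 e0 c1); exists N => n /h.
rewrite -mulrBr normrM ltr_pdivlMr // => lt_e; apply: le_lt_trans lt_e.
by rewrite mulrC; apply: ler_wpM2l; rewrite // lerDl.
Qed.

Lemma cvgR_sum (I : Type) (r : seq I) (P : pred I) (f : I -> nat -> R) (a : I -> R) :
  (forall i, P i -> cvgR (f i) (a i)) ->
  cvgR (fun n => \sum_(i <- r | P i) f i n) (\sum_(i <- r | P i) a i).
Proof.
move=> fa; elim: r => [|j r IH].
  by rewrite big_nil; apply: cvgR_ext (cvgR_cst 0) => n; rewrite big_nil.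
rewrite big_cons; case: ifP => Pj; last by apply: cvgR_ext IH => n; rewrite big_cons Pj.
by apply: cvgR_ext (cvgRD (fa j Pj) IH) => n; rewrite big_cons Pj.
Qed.

Lemma cvgR_eq0 f l : (forall n, f n = 0) -> cvgR f l -> l = 0.
Proof.
move=> f0 fl; apply/eqP; rewrite -normr_eq0 eq_le normr_ge0 andbT.
apply/ler_addgt0Pr => e /fl[N /(_ N (leqnn N))].
by rewrite f0 sub0r normrN add0r => /ltW.
Qed.

Lemma cvgR_uniq f g a b : (forall n, f n = g n) -> cvgR f a -> cvgR g b -> a = b.
Proof.
move=> fg fa gb; apply/eqP; rewrite -subr_eq0; apply/eqP.
apply: (cvgR_eq0 (f := fun n => f n + -1 * g n)); first by move=> n; rewrite fg; ring.
by have := cvgRD fa (cvgRZ (-1) gb); rewrite mulN1r.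
Qed.

Lemma cvg_Re_ip x y a b : cvgV x a -> cvgV y b ->
  cvgR (fun n => complex.Re (ip (x n) (y n))) (complex.Re (ip a b)).
Proof.
move=> xa yb e e0.
pose K := nrm a + nrm b + 2; pose eta := Num.min 1 (e / K).
have K0 : 0 < K by rewrite /K; have := hnorm_ge0 ip a; have := hnorm_ge0 ip b; lra.
have eta0 : 0 < eta by rewrite lt_min ltr01 divr_gt0.
have eta1 : eta <= 1 by rewrite ge_min lexx.
have etaK : eta * K <= e by rewrite -ler_pdivlMr // ge_min lexx orbT.
have [[N1 h1] [N2 h2]] := (xa _ eta0, yb _ eta0).
exists (maxn N1 N2) => n; rewrite geq_max => /andP[/h1 n1 /h2 n2].
have -> : complex.Re (ip (x n) (y n)) - complex.Re (ip a b)
   = complex.Re (ip (x n - a) (y n)) + complex.Re (ip a (y n - b)).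
  by rewrite ipBl ?ipBr // !raddfB /=; ring.
apply: le_lt_trans (ler_normD _ _) _.
have c1 := Re_ip_norm_le ip_inner (x n - a) (y n).
have c2 := Re_ip_norm_le ip_inner a (y n - b).
have yn : nrm (y n) <= nrm b + nrm (y n - b) by rewrite -{1}(subrK b (y n)) addrC hnormD.
have := hnorm_ge0 ip (x n - a); have := hnorm_ge0 ip (y n - b).
have := hnorm_ge0 ip a; have := hnorm_ge0 ip b; have := hnorm_ge0 ip (y n).
move: etaK; rewrite /K; nra.
Qed.

End Convergence.

Lemma complex_eq_Re (R : rcfType) (z1 z2 : R[i]) :
  complex.Re z1 = complex.Re z2 -> complex.Re ('i * z1) = complex.Re ('i * z2) -> z1 = z2.
Proof.
case: z1 => a b; case: z2 => c d /= -> h; congr (_ +i* _).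
by move: h; rewrite !mul0r !mul1r !sub0r => /oppr_inj.
Qed.

Section Operators.
Variables (R : realType) (V : lmodType R[i]) (ip : V -> V -> R[i]).
Hypothesis ip_inner : inner_product ip.
Local Notation nrm := (hnorm ip).
Local Notation adj := (adj ip).

Lemma op_app0 (A : op V) : is_op A -> app A 0 = 0.
Proof.
move=> [[D0 _] lin]; have := lin 1 0 0 D0 D0; rewrite !scale1r addr0 => h.
by apply: (@addrI _ (app A 0)); rewrite addr0 -h.
Qed.

Lemma op_domZ (A : op V) c a : is_op A -> dom A a ->
  dom A (c *: a) /\ app A (c *: a) = c *: app A a.
Proof.
move=> opA Da; have [[D0 Dlin] lin] := opA; rewrite -(addr0 (c *: a)).
by split; [apply: Dlin | rewrite lin // op_app0 // addr0].
Qed.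

Lemma op_domB (A : op V) a b : is_op A -> dom A a -> dom A b ->
  dom A (a - b) /\ app A (a - b) = app A a - app A b.
Proof.
move=> [[_ Dlin] lin] Da Db; rewrite -scaleN1r addrC.
by split; [apply: Dlin | rewrite lin // scaleN1r addrC].
Qed.

Lemma dense_setT : dense ip (fun=> True).
Proof. by move=> u e e0; exists u; rewrite subrr (hnorm0 ip_inner). Qed.

Lemma core_dense_dom (A : op V) (P : V -> Prop) :
  dense ip P -> is_core ip P A -> dense ip (dom A).
Proof. by move=> P_dense [PA _] u e /(P_dense u)[w [/PA Aw uw]]; exists w. Qed.

Lemma adj_spec (A : op V) v : adj_dom ip A v ->
  forall u, dom A u -> ip v (app A u) = ip (app (adj A) v) u.
Proof. exact: (epsilon_spec (inhabits 0) (fun w => forall u, dom A u -> _ = ip w u)). Qed.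

Lemma adj_specC (A : op V) u v : adj_dom ip A v -> dom A u ->
  ip (app A u) v = ip u (app (adj A) v).
Proof. by move=> Av Au; rewrite (ipC ip_inner) (adj_spec Av Au) -(ipC ip_inner). Qed.

Lemma ortho_dense (S : V -> Prop) w : dense ip S -> (forall u, S u -> ip w u = 0) -> w = 0.
Proof.
move=> S_dense w_perp; apply: (hnorm_eq0 ip_inner); apply/eqP.
rewrite eq_le hnorm_ge0 andbT; apply/ler_addgt0Pr => e e0.
have [s [Ss lt_e]] := S_dense w e e0.
have : nrm w ^+ 2 <= nrm w * e.
  rewrite (hnorm_sqr ip_inner) -[X in ip w X](subrK s) (ipDr ip_inner) (w_perp s) // addr0.
  by rewrite (le_trans (Re_ip_le ip_inner _ _)) // ler_wpM2l ?hnorm_ge0 ?ltW.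
by have := hnorm_ge0 ip w; rewrite add0r; nra.
Qed.

Lemma eq_dense (S : V -> Prop) a b : dense ip S -> (forall s, S s -> ip s a = ip s b) -> a = b.
Proof.
move=> S_dense ab; apply/eqP; rewrite -subr_eq0; apply/eqP.
apply: (ortho_dense S_dense) => u Su.
by rewrite (ipBl ip_inner) (ipC ip_inner u a) (ipC ip_inner u b) ab // subrr.
Qed.

Lemma adj_unique (A : op V) v w : dense ip (dom A) -> adj_dom ip A v ->
  (forall u, dom A u -> ip v (app A u) = ip w u) -> app (adj A) v = w.
Proof.
move=> A_dense Av vw; apply/eqP; rewrite -subr_eq0; apply/eqP.
apply: (ortho_dense A_dense) => u Du.
by rewrite (ipBl ip_inner) -adj_spec // vw // subrr.
Qed.

Lemma adj_dom_lin (A : op V) c v v' : adj_dom ip A v -> adj_dom ip A v' ->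
  adj_dom ip A (c *: v + v').
Proof.
move=> [w vw] [w' vw']; exists (c *: w + w') => u Du.
by rewrite (ipDl ip_inner) (ipZl ip_inner) vw // vw' // -(ipZl ip_inner) -(ipDl ip_inner).
Qed.

Lemma adj_is_op (A : op V) : dense ip (dom A) -> is_op (adj A).
Proof.
move=> A_dense; split.
  by split=> [|c v v']; [exists 0 => u _; rewrite !(ip0l ip_inner) | apply: adj_dom_lin].
move=> c v v' Av Av'; apply: adj_unique => //; first exact: adj_dom_lin.
by move=> u Du; rewrite !(ipDl ip_inner) !(ipZl ip_inner) -!adj_spec.
Qed.

Lemma adj_closed (A : op V) : dense ip (dom A) -> is_op A -> closed_op ip (adj A).
Proof.
move=> A_dense opA; split; first exact: adj_is_op.
move=> x u w Ax xu Axw.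
have Re_uw y : dom A y -> complex.Re (ip u (app A y)) = complex.Re (ip w y).
  move=> Ay; apply: (cvgR_uniq (f := fun n => complex.Re (ip (x n) (app A y)))
    (g := fun n => complex.Re (ip (app (adj A) (x n)) y))).
  - by move=> n; rewrite (adj_spec (Ax n) Ay).
  - apply: (cvg_Re_ip ip_inner xu (cvgV_cst ip_inner (app A y))).
  - exact: (cvg_Re_ip ip_inner Axw (cvgV_cst ip_inner y)).
have uw y : dom A y -> ip u (app A y) = ip w y.
  move=> Ay; apply: complex_eq_Re; first exact: Re_uw.
  have [Aiy Aiy_eq] := op_domZ 'i opA Ay.
  by rewrite -!(ipZr ip_inner) -Aiy_eq Re_uw.
have Au : adj_dom ip A u by exists w.
by split=> //; apply: adj_unique.
Qed.

End Operators.

Lemma inv_succ_lt (R : archiFieldType) (e : R) : 0 < e ->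
  exists N, forall n, (N <= n)%N -> (n.+1%:R)^-1 < e.
Proof.
move=> e0; exists (Num.Def.archi_bound e^-1) => n le_Nn.
have /archi_boundP lt_bound : 0 <= e^-1 by rewrite invr_ge0 ltW.
rewrite invf_plt ?posrE ?ltr0Sn // (lt_le_trans lt_bound) // ler_nat.
exact: leqW.
Qed.

Lemma eq0_of_quadratic_ge0 (R : realFieldType) (a b : R) : 0 <= b ->
  (forall t, 0 <= t * a + t ^+ 2 * b) -> a = 0.
Proof.
move=> b0 ge0; have b1 : b + 1 != 0 by rewrite lt0r_neq0 // ltr_pwDr.
have := ge0 (- a / (b + 1)).
have -> : - a / (b + 1) * a + (- a / (b + 1)) ^+ 2 * b = - (a / (b + 1)) ^+ 2 by field.
rewrite oppr_ge0 => le0; have /eqP : (a / (b + 1)) ^+ 2 = 0 by apply/eqP; rewrite eq_le le0 sqr_ge0.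
by rewrite sqrf_eq0 mulf_eq0 invr_eq0 (negbTE b1) orbF => /eqP.
Qed.

Section Riesz.
Variables (R : realType) (V : lmodType R[i]) (ip : V -> V -> R[i]).
Hypothesis ip_inner : inner_product ip.
Hypothesis ip_complete : forall x, cauchyV ip x -> exists l, cvgV ip x l.
Local Notation nrm := (hnorm ip).
Variable f : V -> R[i].
Hypothesis f_lin : forall a u u', f (a *: u + u') = a * f u + f u'.
Variable c : R.
Hypothesis f_bounded : forall u, complex.Re (f u) <= c * nrm u.

Let f0 : f 0 = 0.
Proof.
have := f_lin 1 0 0; rewrite scale1r addr0 mul1r => f00.
by apply: (@addrI _ (f 0)); rewrite addr0 -f00.
Qed.

Let fZ a u : f (a *: u) = a * f u.
Proof. by rewrite -(addr0 (a *: u)) f_lin f0 addr0. Qed.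

Let fD u u' : f (u + u') = f u + f u'.
Proof. by rewrite -{1}(scale1r u) f_lin mul1r. Qed.

Let fB u u' : f (u - u') = f u - f u'.
Proof. by rewrite fD -scaleN1r fZ mulN1r. Qed.

Let Re_f_norm_le u : `|complex.Re (f u)| <= `|c| * nrm u.
Proof.
have := f_bounded u; have := f_bounded (- u).
rewrite (hnormN ip_inner) -scaleN1r fZ mulN1r raddfN.
have := ler_wpM2r (hnorm_ge0 ip u) (ler_norm c).
by rewrite ler_norml; lra.
Qed.

(* the energy functional whose minimiser represents [f] *)
Let J y := nrm y ^+ 2 - 2 * complex.Re (f y).
Local Notation J_infimum := (inf (fun r => exists y, r = J y)).

Let J_lb y : - `|c| ^+ 2 <= J y.
Proof.
have := Re_f_norm_le y; have := hnorm_ge0 ip y; have := sqr_ge0 (nrm y - `|c|).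
by rewrite /J ler_norml; nra.
Qed.

Let J_inf : classical_sets.has_inf (fun r => exists y, r = J y).
Proof. by split; [exists (J 0), 0 | exists (- `|c| ^+ 2) => r [y ->]; apply: J_lb]. Qed.

Let J_ge_inf y : J_infimum <= J y.
Proof. exact: (ge_inf (proj2 J_inf) (ex_intro _ y erefl)). Qed.

Let J_parallelogram a b :
  nrm (a - b) ^+ 2 = 2 * (J a + J b) - 4 * J ((2^-1)%:C *: (a + b)).
Proof.
rewrite /J (hnorm_sqrZ ip_inner) fZ Re_realM fD raddfD !(hnorm_sqr ip_inner).
rewrite (ipBl ip_inner) !(ipBr ip_inner) (ipDl ip_inner) !(ipDr ip_inner) !raddfB !raddfD /=.
by rewrite (Re_ipC ip_inner b a); field.
Qed.

Let J_cvg y x : cvgV ip x y -> cvgR (fun n => J (x n)) (J y).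
Proof.
move=> xy; have -> : J y = nrm y ^+ 2 + -2 * complex.Re (f y) by rewrite /J; ring.
apply: (cvgR_ext (f := fun n => nrm (x n) ^+ 2 + -2 * complex.Re (f (x n)))).
  by move=> n; rewrite /J; ring.
apply: cvgRD; last apply: cvgRZ.
  rewrite (hnorm_sqr ip_inner); apply: cvgR_ext (cvg_Re_ip ip_inner xy xy) => n.
  exact/esym/(hnorm_sqr ip_inner).
move=> e e0; have c1 : 0 < `|c| + 1 by rewrite ltr_pwDr.
have [N h] := xy _ (divr_gt0 e0 c1); exists N => n /h.
rewrite -raddfB -fB ltr_pdivlMr // => lt_e; apply: le_lt_trans (Re_f_norm_le _) _.
by have := hnorm_ge0 ip (x n - y); have := normr_ge0 c; nra.
Qed.

Let ys n := epsilon (inhabits 0) (fun y => J y < J_infimum + (n.+1%:R)^-1).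

Let ysP n : J (ys n) < J_infimum + (n.+1%:R)^-1.
Proof.
apply: (epsilon_spec (inhabits 0) (fun y => J y < _)).
have n0 : 0 < (n.+1%:R : R)^-1 by rewrite invr_gt0 ltr0Sn.
have [r [y ->] ?] := inf_adherent n0 J_inf.
by exists y.
Qed.

Let ys_cauchy : cauchyV ip ys.
Proof.
move=> e e0; have ee0 : 0 < e * e / 4 by rewrite divr_gt0 ?mulr_gt0.
have [N hN] := inv_succ_lt ee0; exists N => n k /hN ltn /hN ltk.
have : nrm (ys n - ys k) ^+ 2 < e * e.
  have := J_ge_inf ((2^-1)%:C *: (ys n + ys k)); have := ysP n; have := ysP k.
  have -> : e * e = 4 * (e * e / 4) by field.
  rewrite J_parallelogram; move: ltn ltk; move: (k.+1%:R^-1) (n.+1%:R^-1) => x y; lra.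
by have := hnorm_ge0 ip (ys n - ys k); nra.
Qed.

Let J_minimizer : exists y, forall z, J y <= J z.
Proof.
have [y ys_y] := ip_complete ys_cauchy; exists y => z; apply: le_trans (J_ge_inf z).
apply/ler_addgt0Pr => e e0; have e2 : 0 < e / 2 by rewrite divr_gt0.
have [[N1 h1] [N2 h2]] := (J_cvg ys_y e2, inv_succ_lt e2).
have := ysP (maxn N1 N2); have := h2 _ (leq_maxr N1 N2).
by have := h1 _ (leq_maxl N1 N2); rewrite ltr_norml; move: ((maxn N1 N2).+1%:R^-1) => x; lra.
Qed.

Let J_shift y t u :
  J (y + t%:C *: u) = J y + t * (2 * (complex.Re (ip y u) - complex.Re (f u)))
                      + t ^+ 2 * nrm u ^+ 2.
Proof.
rewrite /J fD fZ !(hnorm_sqr ip_inner) (ipDl ip_inner) !(ipDr ip_inner).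
rewrite !(ipZl ip_inner) !(ipZr ip_inner) conjcR mulrA -rmorphM !raddfD /= !Re_realM.
by rewrite (Re_ipC ip_inner u y); ring.
Qed.

Lemma riesz : exists w, forall u, f u = ip w u.
Proof.
have [y y_min] := J_minimizer.
have Re_y u : complex.Re (ip y u) = complex.Re (f u).
  apply/eqP; rewrite -subr_eq0; apply/eqP.
  suff /eqP : 2 * (complex.Re (ip y u) - complex.Re (f u)) = 0.
    by rewrite mulf_eq0 pnatr_eq0 /= => /eqP.
  apply: (eq0_of_quadratic_ge0 (sqr_ge0 (nrm u))) => t.
  by have := y_min (y + t%:C *: u); rewrite J_shift; lra.
by exists y => u; apply: complex_eq_Re; rewrite -?fZ -?(ipZr ip_inner) Re_y.
Qed.

End Riesz.

Section BoundedOperators.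
Variables (R : realType) (V : lmodType R[i]) (ip : V -> V -> R[i]).
Hypothesis ip_inner : inner_product ip.
Hypothesis ip_complete : forall x, cauchyV ip x -> exists l, cvgV ip x l.
Local Notation nrm := (hnorm ip).
Local Notation adj := (adj ip).
Variable S : V -> V.
Hypothesis S_bounded : bounded ip S.

Lemma bounded_bound_ge0 : exists M, 0 <= M /\ forall u, nrm (S u) <= M * nrm u.
Proof.
have [_ [M SM]] := S_bounded; exists `|M|; split=> // u.
by rewrite (le_trans (SM u)) // ler_wpM2r ?hnorm_ge0 ?ler_norm.
Qed.

Lemma boundedD u v : S (u + v) = S u + S v.
Proof. by have [S_lin _] := S_bounded; rewrite -{1}(scale1r u) S_lin // scale1r. Qed.

Lemma bounded0 : S 0 = 0.
Proof. by apply: (@addrI _ (S 0)); rewrite -boundedD !addr0. Qed.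

Lemma boundedN u : S (- u) = - S u.
Proof. by apply: (@addrI _ (S u)); rewrite -boundedD !subrr bounded0. Qed.

Lemma bounded_sum (I : Type) (r : seq I) (P : pred I) (f : I -> V) :
  S (\sum_(i <- r | P i) f i) = \sum_(i <- r | P i) S (f i).
Proof. exact: (big_morph _ boundedD bounded0). Qed.

Lemma bounded_adj_dom v : adj_dom ip (tot S) v.
Proof.
have [S_lin [M SM]] := S_bounded.
have f_lin a u u' : ip v (S (a *: u + u')) = a * ip v (S u) + ip v (S u').
  by rewrite S_lin // (ipDr ip_inner) (ipZr ip_inner).
have f_bounded u : complex.Re (ip v (S u)) <= (nrm v * M) * nrm u.
  rewrite -mulrA (le_trans (Re_ip_le ip_inner _ _)) //.
  by apply: ler_wpM2l; [exact: hnorm_ge0 | exact: SM].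
have [w vw] := riesz ip_inner ip_complete f_lin f_bounded.
by exists w => u _.
Qed.

Lemma bounded_adj_spec v u : ip v (S u) = ip (app (adj (tot S)) v) u.
Proof. exact: (adj_spec (bounded_adj_dom v)). Qed.

Lemma bounded_adj_specC u v : ip (S u) v = ip u (app (adj (tot S)) v).
Proof. exact: (adj_specC ip_inner (bounded_adj_dom v)). Qed.

Lemma bounded_adj_bounded : bounded ip (app (adj (tot S))).
Proof.
have [_ adj_lin] := adj_is_op ip_inner (A := tot S) (dense_setT ip_inner).
split=> [a u v _ _|]; first by apply: adj_lin; apply: bounded_adj_dom.
have [M [M0 SM]] := bounded_bound_ge0; exists M => v.
set w := app (adj (tot S)) v.
have le_w : nrm w ^+ 2 <= nrm v * (M * nrm w).
  rewrite (hnorm_sqr ip_inner) /w -bounded_adj_spec (le_trans (Re_ip_le ip_inner _ _)) //.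
  by apply: ler_wpM2l; [exact: hnorm_ge0 | exact: SM].
have [->|w0] := eqVneq (nrm w) 0; first by rewrite mulr_ge0 ?hnorm_ge0.
have w_gt0 : 0 < nrm w by rewrite lt0r w0 hnorm_ge0.
rewrite -(ler_pM2l w_gt0) -expr2 (le_trans le_w) //.
by have -> : nrm w * (M * nrm v) = nrm v * (M * nrm w) by ring.
Qed.

End BoundedOperators.

Lemma sum_if_eq (M : nmodType) (I : finType) (P : pred I) (j : I) (f : I -> M) :
  P j -> \sum_(k | P k) (if k == j then f k else 0) = f j.
Proof. by move=> Pj; rewrite -big_mkcondr (big_pred1 j) // => k; rewrite andb_idl // => /eqP->. Qed.

Section BlockForm.
Variables (R : realType) (V : lmodType R[i]) (ip : V -> V -> R[i]).
Hypothesis ip_inner : inner_product ip.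
Local Notation nrm := (hnorm ip).
Variables (n : nat) (G T : 'I_n.+1 -> 'I_n.+1 -> V -> V) (P : V -> Prop).

Definition block_form (u : 'I_n.+1 -> V) : R[i] :=
  \sum_(i < n.+1) \sum_(j < n.+1)
    (ip (u i) (G i j (u j)) + ip (G j i (u i)) (u j)
     + \sum_(k < n.+1 | k != ord0) ip (G k i (u i)) (G k j (u j))).

Hypothesis G_T : forall i j, i != ord0 -> j != ord0 -> forall w,
  G i j w = T i j w - (if i == j then w else 0).
Hypothesis T_isometry : forall i j, i != ord0 -> j != ord0 -> forall a b,
  \sum_(k < n.+1 | k != ord0) ip (T k i a) (T k j b) = ip a (if i == j then b else 0).
Hypothesis G_dissipative : forall a, P a ->
  2 * complex.Re (ip (G ord0 ord0 a) a) = - \sum_(k < n.+1 | k != ord0) nrm (G k ord0 a) ^+ 2.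
Hypothesis G_coupling : forall a b j, P a -> P b -> j != ord0 ->
  ip a (G ord0 j b) = - \sum_(k < n.+1 | k != ord0) ip (G k ord0 a) (T k j b).

Let block_term00 a : P a ->
  ip a (G ord0 ord0 a) + ip (G ord0 ord0 a) a
  + \sum_(k < n.+1 | k != ord0) ip (G k ord0 a) (G k ord0 a) = 0.
Proof.
move=> Pa; rewrite [ip a _](ipC ip_inner).
have -> : forall z : R[i], conjc z + z = (2 * complex.Re z)%:C.
  by case=> x y; congr (_ +i* _) => /=; ring.
rewrite G_dissipative // (eq_bigr _ (fun k _ => ip_self ip_inner _)).
by rewrite -(raddf_sum (real_complex R)) -raddfD addNr.
Qed.

Let sum_nz_if_eq (f : 'I_n.+1 -> R[i]) j : j != ord0 ->
  \sum_(k < n.+1 | k != ord0) (if k == j then f k else 0) = f j.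
Proof. exact: (sum_if_eq (P := fun k : 'I_n.+1 => k != ord0)). Qed.

Let block_term0j a b j : P a -> P b -> j != ord0 ->
  ip a (G ord0 j b) + ip (G j ord0 a) b
  + \sum_(k < n.+1 | k != ord0) ip (G k ord0 a) (G k j b) = 0.
Proof.
move=> Pa Pb j0.
have -> : \sum_(k < n.+1 | k != ord0) ip (G k ord0 a) (G k j b)
          = \sum_(k < n.+1 | k != ord0) ip (G k ord0 a) (T k j b) - ip (G j ord0 a) b.
  rewrite -(sum_nz_if_eq (fun k => ip (G k ord0 a) b) j0) -sumrB.
  by apply: eq_bigr => k k0; rewrite (G_T k0 j0) (ipBr ip_inner) (ip_ifr ip_inner).
by rewrite G_coupling //; ring.
Qed.

Let block_termi0 a b i : P a -> P b -> i != ord0 ->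
  ip a (G i ord0 b) + ip (G ord0 i a) b
  + \sum_(k < n.+1 | k != ord0) ip (G k i a) (G k ord0 b) = 0.
Proof.
move=> Pa Pb i0.
have -> : \sum_(k < n.+1 | k != ord0) ip (G k i a) (G k ord0 b)
          = \sum_(k < n.+1 | k != ord0) ip (T k i a) (G k ord0 b) - ip a (G i ord0 b).
  rewrite -(sum_nz_if_eq (fun k => ip a (G k ord0 b)) i0) -sumrB.
  by apply: eq_bigr => k k0; rewrite (G_T k0 i0) (ipBl ip_inner) (ip_ifl ip_inner).
have -> : ip (G ord0 i a) b = - \sum_(k < n.+1 | k != ord0) ip (T k i a) (G k ord0 b).
  rewrite (ipC ip_inner) G_coupling // rmorphN rmorph_sum; congr (- _).
  by apply: eq_bigr => k _; rewrite (ipC ip_inner _ (T k i a)).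
ring.
Qed.

Let block_termij a b i j : i != ord0 -> j != ord0 ->
  ip a (G i j b) + ip (G j i a) b
  + \sum_(k < n.+1 | k != ord0) ip (G k i a) (G k j b) = 0.
Proof.
move=> i0 j0.
have -> : \sum_(k < n.+1 | k != ord0) ip (G k i a) (G k j b)
          = \sum_(k < n.+1 | k != ord0) ip (T k i a) (T k j b)
            - ip (T j i a) b - ip a (T i j b) + ip a (if i == j then b else 0).
  rewrite -(sum_nz_if_eq (fun k => ip (T k i a) b) j0).
  rewrite -(sum_nz_if_eq (fun k => ip a (T k j b)) i0).
  rewrite -(sum_nz_if_eq (fun k => ip a (if k == j then b else 0)) i0) -!sumrB -big_split /=.
  apply: eq_bigr => k k0; rewrite (G_T k0 i0) (G_T k0 j0) (ipBl ip_inner).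
  rewrite !(ipBr ip_inner) !(ip_ifl ip_inner) !(ip_ifr ip_inner).
  by case: (k == i); case: (k == j) => /=; ring.
rewrite T_isometry // (G_T i0 j0) (G_T j0 i0) (ipBr ip_inner) (ipBl ip_inner).
by rewrite (ip_ifr ip_inner) (ip_ifl ip_inner) [j == i]eq_sym; case: (i == j) => /=; ring.
Qed.

Lemma block_form_eq0 u : (forall i, P (u i)) -> block_form u = 0.
Proof.
move=> Pu; apply: big1 => i _; apply: big1 => j _.
have [-> {i}|i0] := eqVneq i ord0; have [-> {j}|j0] := eqVneq j ord0.
- exact: block_term00.
- exact: block_term0j.
- exact: block_termi0.
- exact: block_termij.
Qed.

End BlockForm.

Lemma coisometry_swap (R : realType) (V : lmodType R[i]) (ip : V -> V -> R[i]) (n : nat)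
    (T U : 'I_n.+1 -> 'I_n.+1 -> V -> V) (r s : 'I_n.+1 -> V) :
  (forall i k, i != ord0 -> k != ord0 -> bounded ip (T i k)) ->
  (forall i l, i != ord0 -> l != ord0 -> forall w,
     \sum_(k < n.+1 | k != ord0) T i k (U l k w) = if i == l then w else 0) ->
  (forall k, k != ord0 -> s k = - \sum_(l < n.+1 | l != ord0) U l k (r l)) ->
  forall i, i != ord0 -> r i = - \sum_(k < n.+1 | k != ord0) T i k (s k).
Proof.
move=> T_bounded TU s_def i i0.
rewrite (eq_bigr _ (fun k k0 => congr1 (T i k) (s_def k k0))).
under eq_bigr => k k0 do
  rewrite (boundedN (T_bounded i k i0 k0)) (bounded_sum (T_bounded i k i0 k0)).
rewrite sumrN opprK exchange_big /= (eq_bigr _ (fun l l0 => TU i l i0 l0 (r l))).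
rewrite -(sum_if_eq (P := fun l : 'I_n.+1 => l != ord0) r i0).
by apply: eq_bigr => l _; rewrite eq_sym.
Qed.

Section RelativeBound.
Variables (R : realType) (V : lmodType R[i]) (ip : V -> V -> R[i]).
Hypothesis ip_inner : inner_product ip.
Hypothesis ip_complete : forall x, cauchyV ip x -> exists l, cvgV ip x l.
Local Notation nrm := (hnorm ip).
Local Notation cvgV := (cvgV ip).

Definition rel_bounded (P : V -> Prop) (A T : op V) :=
  exists2 c, 0 <= c & forall x, P x -> nrm (app A x) <= c * (nrm (app T x) + nrm x).

Lemma cauchyV_dominated (y a b : nat -> V) (c : R) : 0 <= c ->
  cauchyV ip a -> cauchyV ip b ->
  (forall n m, nrm (y n - y m) <= c * (nrm (a n - a m) + nrm (b n - b m))) -> cauchyV ip y.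
Proof.
move=> c0 a_cauchy b_cauchy yab e e0; have c1 : 0 < 2 * (c + 1) by rewrite mulr_gt0 ?ltr_pwDr.
have [[N1 h1] [N2 h2]] := (a_cauchy _ (divr_gt0 e0 c1), b_cauchy _ (divr_gt0 e0 c1)).
exists (maxn N1 N2) => n m; rewrite !geq_max => /andP[n1 n2] /andP[m1 m2].
apply: le_lt_trans (yab n m) _.
have := h1 n m n1 m1; have := h2 n m n2 m2; rewrite !ltr_pdivlMr //.
have := hnorm_ge0 ip (a n - a m); have := hnorm_ge0 ip (b n - b m); nra.
Qed.

Lemma rel_bounded_closure (A T : op V) (P : V -> Prop) :
  closed_op ip A -> is_op T -> subspace P -> subsetV P (dom A) -> subsetV P (dom T) ->
  rel_bounded P A T ->
  forall x u w, (forall n, P (x n)) -> cvgV x u -> cvgV (fun n => app T (x n)) w ->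
  dom A u /\ cvgV (fun n => app A (x n)) (app A u).
Proof.
move=> [opA A_closed] opT [_ P_lin] PA PT [c c0 Ac] x u w Px xu Txw.
have PB a b : P a -> P b -> P (a - b) by move=> Pa Pb; rewrite -scaleN1r addrC; apply: P_lin.
have : cauchyV ip (fun n => app A (x n)).
  apply: (cauchyV_dominated c0 (cvgV_cauchy ip_inner Txw) (cvgV_cauchy ip_inner xu)) => n m.
  have [_ <-] := op_domB opA (PA _ (Px n)) (PA _ (Px m)).
  by have [_ <-] := op_domB opT (PT _ (Px n)) (PT _ (Px m)); apply: Ac; apply: PB.
move=> /ip_complete[z Axz]; have [Au Auz] := A_closed x u z (fun n => PA _ (Px n)) xu Axz.
by rewrite Auz.
Qed.

Lemma dissipative_bound (I : finType) (P : pred I) (g : I -> V) x y k : P k ->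
  2 * complex.Re (ip y x) = - \sum_(l | P l) nrm (g l) ^+ 2 ->
  nrm (g k) <= nrm y + nrm x.
Proof.
move=> Pk diss; have gk_le : nrm (g k) ^+ 2 <= \sum_(l | P l) nrm (g l) ^+ 2.
  by rewrite (bigD1 k) //= lerDl sumr_ge0 // => l _; apply: sqr_ge0.
have := Re_ip_norm_le ip_inner y x; rewrite ler_norml => /andP[yx_lb _].
rewrite -ler_sqr ?nnegrE ?addr_ge0 ?hnorm_ge0 //.
have := hnorm_ge0 ip y; have := hnorm_ge0 ip x; move: gk_le yx_lb diss.
set s := \sum_(l | P l) _; set r := complex.Re _; nra.
Qed.

Lemma rel_bounded_comb (I : finType) (P : pred I) (Q : V -> Prop) (A B : op V)
    (T : I -> V -> V) (g : I -> op V) (c : R) :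
  (forall l, P l -> bounded ip (T l)) -> 0 <= c ->
  (forall l x, P l -> Q x -> nrm (app (g l) x) <= c * (nrm (app A x) + nrm x)) ->
  (forall x, Q x -> app B x = - \sum_(l | P l) T l (app (g l) x)) ->
  rel_bounded Q B A.
Proof.
move=> T_bounded c0 g_le B_def.
have /fin_all_exists[M M_bound] : forall l, exists M : R, P l ->
    0 <= M /\ forall u, nrm (T l u) <= M * nrm u.
  move=> l; have [Pl|_] := boolP (P l); last by exists 0.
  by have [M ?] := bounded_bound_ge0 (T_bounded l Pl); exists M.
exists ((\sum_(l | P l) M l) * c) => [|x Qx].
  by rewrite mulr_ge0 // sumr_ge0 // => l /M_bound[].
rewrite B_def // (hnormN ip_inner) (le_trans (hnorm_sum ip_inner _ _ _)) //.
rewrite mulr_suml mulr_suml; apply: ler_sum => l Pl.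
have [M0 TM] := M_bound l Pl; rewrite (le_trans (TM _)) // -mulrA.
by rewrite ler_wpM2l // g_le.
Qed.

Lemma dissipative_cvg (I : Type) (r : seq I) (P : pred I) (A : op V) (g : I -> op V) x u :
  cvgV x u -> cvgV (fun n => app A (x n)) (app A u) ->
  (forall k, P k -> cvgV (fun n => app (g k) (x n)) (app (g k) u)) ->
  (forall n, 2 * complex.Re (ip (app A (x n)) (x n))
       = - \sum_(k <- r | P k) nrm (app (g k) (x n)) ^+ 2) ->
  2 * complex.Re (ip (app A u) u) = - \sum_(k <- r | P k) nrm (app (g k) u) ^+ 2.
Proof.
move=> xu Axu gxu diss; apply/eqP; rewrite -subr_eq0 opprK; apply/eqP.
apply: (cvgR_eq0 (f := fun n => 2 * complex.Re (ip (app A (x n)) (x n))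
   + \sum_(k <- r | P k) nrm (app (g k) (x n)) ^+ 2)); first by move=> n; rewrite diss addNr.
apply: cvgRD; first exact: cvgRZ (cvg_Re_ip ip_inner Axu xu).
apply: cvgR_sum => k Pk; rewrite (hnorm_sqr ip_inner).
apply: cvgR_ext (cvg_Re_ip ip_inner (gxu k Pk) (gxu k Pk)) => n.
exact/esym/(hnorm_sqr ip_inner).
Qed.

End RelativeBound.

Section HypothesisC.
Variables (R : realType) (V : lmodType R[i]) (ip : V -> V -> R[i]).
Hypothesis ip_inner : inner_product ip.
Hypothesis ip_complete : forall x, cauchyV ip x -> exists l, cvgV ip x l.
Local Notation nrm := (hnorm ip).
Local Notation cvgV := (cvgV ip).
Local Notation adj := (adj ip).
Variables (d : nat) (F : 'I_d.+1 -> 'I_d.+1 -> op V) (S : 'I_d.+1 -> 'I_d.+1 -> V -> V).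
Variables (D Dt : V -> Prop).
Local Notation K := (F ord0 ord0).
Local Notation Rk k := (F k ord0).
Local Notation Nk k := (F ord0 k).
Local Notation Sadj i j := (app (adj (tot (S i j)))).

Hypothesis F_closed : forall i j, closed_op ip (F i j).
Hypothesis F_S : forall i j, i != ord0 -> j != ord0 ->
  [/\ bounded ip (S i j), (forall u, dom (F i j) u) &
      forall u, app (F i j) u = S i j u - (if i == j then u else 0)].
Hypothesis S_isometry : forall i j, i != ord0 -> j != ord0 -> forall u,
  \sum_(k < d.+1 | k != ord0) Sadj k i (S k j u) = (if i == j then u else 0).
Hypothesis S_coisometry : forall i j, i != ord0 -> j != ord0 -> forall u,
  \sum_(k < d.+1 | k != ord0) S i k (Sadj j k u) = (if i == j then u else 0).
Hypothesis D_subspace : subspace D.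
Hypothesis D_dense : dense ip D.
Hypothesis K_core : is_core ip D K.
Hypothesis RN_core : forall i, i != ord0 -> is_core ip D (Rk i) /\ is_core ip D (Nk i).
Hypothesis Dt_subspace : subspace Dt.
Hypothesis Dt_dense : dense ip Dt.
Hypothesis Kadj_core : is_core ip Dt (adj K).
Hypothesis RNadj_core : forall i, i != ord0 ->
  is_core ip Dt (adj (Rk i)) /\ is_core ip Dt (adj (Nk i)).
Hypothesis dom_incl : forall i, i != ord0 ->
  [/\ subsetV (fun u => D u \/ Dt u) (dom (adj (Nk i))),
      subsetV (fun u => D u \/ Dt u) (dom (Rk i)) &
      subsetV (dom K) (dom (Nk i))].
Hypothesis S_dom_Radj : forall k i, k != ord0 -> i != ord0 -> forall u,
  dom K u -> dom (adj (Rk k)) (S k i u).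
Hypothesis K_dissipative : forall u, D u ->
  2 * complex.Re (ip (app K u) u) = - \sum_(k < d.+1 | k != ord0) nrm (app (Rk k) u) ^+ 2.
Hypothesis Kadj_dissipative : forall v, Dt v ->
  2 * complex.Re (ip (app (adj K) v) v)
    = - \sum_(k < d.+1 | k != ord0) nrm (app (adj (Nk k)) v) ^+ 2.
Hypothesis Nadj_S_R : forall i, i != ord0 -> forall u, D u \/ Dt u ->
  app (adj (Nk i)) u = - \sum_(k < d.+1 | k != ord0) Sadj k i (app (Rk k) u).

Let S_bounded i j : i != ord0 -> j != ord0 -> bounded ip (S i j).
Proof. by move=> i0 j0; case: (F_S i0 j0). Qed.

Let Sadj_bounded i j : i != ord0 -> j != ord0 -> bounded ip (Sadj i j).
Proof. by move=> i0 j0; apply: bounded_adj_bounded => //; apply: S_bounded. Qed.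

Let S_adj i j : i != ord0 -> j != ord0 -> forall v u, ip v (S i j u) = ip (Sadj i j v) u.
Proof. by move=> i0 j0; apply: bounded_adj_spec => //; apply: S_bounded. Qed.

Let F_op i j : is_op (F i j).
Proof. by case: (F_closed i j). Qed.

Let D_dom_R k : k != ord0 -> subsetV D (dom (Rk k)).
Proof. by move=> k0 u Du; case: (dom_incl k0) => _ + _; apply; left. Qed.

Let Dt_dom_R k : k != ord0 -> subsetV Dt (dom (Rk k)).
Proof. by move=> k0 u Du; case: (dom_incl k0) => _ + _; apply; right. Qed.

Let D_dom_Nadj k : k != ord0 -> subsetV D (dom (adj (Nk k))).
Proof. by move=> k0 u Du; case: (dom_incl k0) => + _ _; apply; left. Qed.

Let Dt_dom_Nadj k : k != ord0 -> subsetV Dt (dom (adj (Nk k))).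
Proof. by move=> k0 u Du; case: (dom_incl k0) => + _ _; apply; right. Qed.

Let Kadj_op : is_op (adj K).
Proof. exact: (adj_is_op ip_inner (core_dense_dom D_dense K_core)). Qed.

Let Nadj_closed k : k != ord0 -> closed_op ip (adj (Nk k)).
Proof.
by move=> k0; apply: adj_closed => //; apply: (core_dense_dom D_dense); case: (RN_core k0).
Qed.

Lemma R_S_Nadj u : D u \/ Dt u -> forall i, i != ord0 ->
  app (Rk i) u = - \sum_(k < d.+1 | k != ord0) S i k (app (adj (Nk k)) u).
Proof.
move=> Du; apply: (coisometry_swap (r := fun l => app (Rk l) u) S_bounded S_coisometry).
by move=> k k0; apply: Nadj_S_R.
Qed.

Let R_le_K k u : k != ord0 -> D u -> nrm (app (Rk k) u) <= nrm (app K u) + nrm u.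
Proof.
move=> k0 Du.
exact: (dissipative_bound ip_inner (g := fun l => app (Rk l) u) k0 (K_dissipative Du)).
Qed.

Let Nadj_le_Kadj k u : k != ord0 -> Dt u ->
  nrm (app (adj (Nk k)) u) <= nrm (app (adj K) u) + nrm u.
Proof.
move=> k0 Du.
exact: (dissipative_bound ip_inner (g := fun l => app (adj (Nk l)) u) k0 (Kadj_dissipative Du)).
Qed.

Let Nadj_rel_K k : k != ord0 -> rel_bounded ip D (adj (Nk k)) K.
Proof.
move=> k0; apply: (rel_bounded_comb ip_inner (P := fun l : 'I_d.+1 => l != ord0)
  (T := fun l => Sadj l k) (g := fun l => Rk l) _ ler01).
- by move=> l l0; apply: Sadj_bounded.
- by move=> l u l0 Du; rewrite mul1r; apply: R_le_K.
- by move=> u Du; apply: Nadj_S_R => //; left.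
Qed.

Let R_rel_Kadj k : k != ord0 -> rel_bounded ip Dt (Rk k) (adj K).
Proof.
move=> k0; apply: (rel_bounded_comb ip_inner (P := fun l : 'I_d.+1 => l != ord0)
  (T := fun l => S k l) (g := fun l => adj (Nk l)) _ ler01).
- by move=> l l0; apply: S_bounded.
- by move=> l u l0 Du; rewrite mul1r; apply: Nadj_le_Kadj.
- by move=> u Du; apply: R_S_Nadj => //; right.
Qed.

Definition core_approx (P : V -> Prop) (A : op V) u := exists x : nat -> V,
  [/\ forall n, P (x n), cvgV x u, cvgV (fun n => app A (x n)) (app A u) &
      forall k, k != ord0 ->
      [/\ dom (Rk k) u, dom (adj (Nk k)) u,
          cvgV (fun n => app (Rk k) (x n)) (app (Rk k) u) &
          cvgV (fun n => app (adj (Nk k)) (x n)) (app (adj (Nk k)) u)]].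

Lemma core_approxP (P : V -> Prop) (A : op V) :
  subspace P -> is_core ip P A -> is_op A ->
  (forall k, k != ord0 ->
     [/\ subsetV P (dom (Rk k)), subsetV P (dom (adj (Nk k))),
         rel_bounded ip P (Rk k) A & rel_bounded ip P (adj (Nk k)) A]) ->
  forall u, dom A u -> core_approx P A u.
Proof.
move=> P_sub [PA A_core] opA RN_P u Au; have [x [Px xu Axu]] := A_core u Au.
exists x; split=> // k k0; have [PR PN Rb Nb] := RN_P k k0.
have [Ru Rxu] := rel_bounded_closure ip_inner ip_complete (F_closed k ord0) opA
  P_sub PR PA Rb Px xu Axu.
have [Nu Nxu] := rel_bounded_closure ip_inner ip_complete (Nadj_closed k0) opA
  P_sub PN PA Nb Px xu Axu.
by split.
Qed.

Let K_approx u : dom K u -> core_approx D K u.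
Proof.
apply: (core_approxP D_subspace K_core (F_op _ _)) => k k0.
split; [exact: D_dom_R | exact: D_dom_Nadj | | exact: Nadj_rel_K].
by exists 1 => // x Dx; rewrite mul1r; apply: R_le_K.
Qed.

Let Kadj_approx u : dom (adj K) u -> core_approx Dt (adj K) u.
Proof.
apply: (core_approxP Dt_subspace Kadj_core Kadj_op) => k k0.
split; [exact: Dt_dom_R | exact: Dt_dom_Nadj | exact: R_rel_Kadj |].
by exists 1 => // x Dx; rewrite mul1r; apply: Nadj_le_Kadj.
Qed.

Let approx_either u : dom K u \/ dom (adj K) u ->
  exists2 P, (forall x, P x -> D x \/ Dt x) & exists A, core_approx P A u.
Proof.
case=> [/K_approx approx|/Kadj_approx approx].
  by exists D => [x|]; [left | exists K].
by exists Dt => [x|]; [right | exists (adj K)].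
Qed.

Lemma dom_R_Nadj k : k != ord0 ->
  subsetV (fun u => dom K u \/ dom (adj K) u) (dom (Rk k)) /\
  subsetV (fun u => dom K u \/ dom (adj K) u) (dom (adj (Nk k))).
Proof. by move=> k0; split=> u /approx_either[P _ [A [x [_ _ _ /(_ k k0)[]]]]]. Qed.

Lemma dom_F u : (forall i j, dom (F i j) u) <-> dom K u.
Proof.
split=> [|Ku i j]; first exact.
have [-> {i}|i0] := eqVneq i ord0; have [-> {j}|j0] := eqVneq j ord0 => //.
- by case: (dom_incl j0) => _ _; apply.
- by case: (dom_R_Nadj i0) => + _; apply; left.
- by case: (F_S i0 j0).
Qed.

Lemma K_dissipative_dom u : dom K u ->
  2 * complex.Re (ip (app K u) u) = - \sum_(k < d.+1 | k != ord0) nrm (app (Rk k) u) ^+ 2.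
Proof.
move=> /K_approx[x [Dx xu Kxu RN]].
apply: (dissipative_cvg ip_inner (g := fun k => Rk k) xu Kxu) => [k k0|n].
  by case: (RN k k0).
exact: K_dissipative.
Qed.

Lemma Kadj_dissipative_dom v : dom (adj K) v ->
  2 * complex.Re (ip (app (adj K) v) v)
    = - \sum_(k < d.+1 | k != ord0) nrm (app (adj (Nk k)) v) ^+ 2.
Proof.
move=> /Kadj_approx[x [Dtx xv Kxv RN]].
apply: (dissipative_cvg ip_inner (g := fun k => adj (Nk k)) xv Kxv) => [k k0|n].
  by case: (RN k k0).
exact: Kadj_dissipative.
Qed.

Lemma Nadj_S_R_dom u i : dom K u \/ dom (adj K) u -> i != ord0 ->
  app (adj (Nk i)) u = - \sum_(k < d.+1 | k != ord0) Sadj k i (app (Rk k) u).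
Proof.
move=> /approx_either[P PD [A [x [Px xu _ RN]]]] i0.
apply: (cvgV_uniq ip_inner (x := fun n => app (adj (Nk i)) (x n))); first by case: (RN i i0).
apply: (cvgV_ext (x := fun n => - \sum_(k < d.+1 | k != ord0) Sadj k i (app (Rk k) (x n)))).
  by move=> n; rewrite Nadj_S_R //; apply: PD.
apply/(cvgVN ip_inner)/(cvgV_sum ip_inner) => k k0.
by apply: (cvgV_bounded (Sadj_bounded k0 i0)); case: (RN k k0).
Qed.

Lemma R_S_Nadj_dom u i : dom K u \/ dom (adj K) u -> i != ord0 ->
  app (Rk i) u = - \sum_(k < d.+1 | k != ord0) S i k (app (adj (Nk k)) u).
Proof.
move=> Ku; apply: (coisometry_swap (r := fun l => app (Rk l) u) S_bounded S_coisometry).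
by move=> k k0; apply: Nadj_S_R_dom.
Qed.

Lemma N_Radj_S u i : dom K u -> i != ord0 ->
  app (Nk i) u = - \sum_(k < d.+1 | k != ord0) app (adj (Rk k)) (S k i u).
Proof.
move=> Ku i0; apply: (eq_dense ip_inner Dt_dense) => s Dts.
have [_ [Nadj_core _]] := RNadj_core i0.
have Nu : dom (Nk i) u by case: (dom_incl i0) => _ _; apply.
rewrite (adj_spec (Nadj_core s Dts) Nu) Nadj_S_R //; last by right.
rewrite (ipNl ip_inner) (ipNr ip_inner) (ip_suml ip_inner) (ip_sumr ip_inner); congr (- _).
apply: eq_bigr => k k0; rewrite -S_adj //.
exact: (adj_specC ip_inner (S_dom_Radj k0 i0 Ku) (Dt_dom_R k0 Dts)).
Qed.

Let Fadj_app i j : i != ord0 -> j != ord0 -> forall w,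
  app (adj (F i j)) w = Sadj i j w - (if i == j then w else 0).
Proof.
move=> i0 j0 w; have [_ Fu F_def] := F_S i0 j0.
have F_adj u : dom (F i j) u ->
    ip w (app (F i j) u) = ip (Sadj i j w - (if i == j then w else 0)) u.
  move=> _; rewrite F_def (ipBr ip_inner) (ipBl ip_inner) S_adj //.
  by rewrite (ip_ifr ip_inner) (ip_ifl ip_inner).
apply: (adj_unique ip_inner _ _ F_adj); last by exists (Sadj i j w - (if i == j then w else 0)).
by move=> u e e0; exists u; rewrite subrr (hnorm0 ip_inner).
Qed.

Lemma block_form_F u : (forall i i' j', dom (F i' j') (u i)) ->
  block_form ip (fun i j => app (F i j)) u = 0.
Proof.
move=> u_dom; apply: (block_form_eq0 ip_inner (T := S) (P := dom K)).
- by move=> i j i0 j0; case: (F_S i0 j0).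
- move=> i j i0 j0 a b; rewrite -S_isometry // (ip_sumr ip_inner).
  by apply: eq_bigr => k k0; apply: bounded_adj_specC => //; apply: S_bounded.
- exact: K_dissipative_dom.
- move=> a b j Ka Kb j0; rewrite N_Radj_S // (ipNr ip_inner) (ip_sumr ip_inner).
  congr (- _); apply: eq_bigr => k k0; apply/esym/(adj_specC ip_inner).
    exact: S_dom_Radj.
  by case: (dom_R_Nadj k0) => + _; apply; left.
- by move=> i; apply: u_dom.
Qed.

Lemma block_form_Fadj v : (forall i, Dt (v i)) ->
  block_form ip (fun i j => app (adj (F j i))) v = 0.
Proof.
move=> Dtv; apply: (block_form_eq0 ip_inner (T := fun i j => Sadj j i) (P := Dt)).
- by move=> i j i0 j0 w; rewrite Fadj_app // eq_sym.
- move=> i j i0 j0 a b; rewrite -S_coisometry // (ip_sumr ip_inner).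
  by apply: eq_bigr => k k0; rewrite S_adj.
- exact: Kadj_dissipative.
- move=> a b j Dta Dtb j0; have [[Radj_core _] _] := RNadj_core j0.
  rewrite -(adj_specC ip_inner (Radj_core b Dtb) (Dt_dom_R j0 Dta)).
  rewrite (R_S_Nadj (or_intror Dta) j0).
  rewrite (ipNl ip_inner) (ip_suml ip_inner); congr (- _); apply: eq_bigr => k k0.
  by apply: bounded_adj_specC => //; apply: S_bounded.
- exact: Dtv.
Qed.

End HypothesisC.

Unset Implicit Arguments. Set Strict Implicit. Set Printing Implicit Defensive.

Theorem mainTheorem1
  (R : realType) (V : lmodType R[i]) (ip : V -> V -> R[i])
  (d : nat) (F : 'I_d.+1 -> 'I_d.+1 -> op V) (Sm : 'I_d.+1 -> 'I_d.+1 -> V -> V)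
  (D Dt : V -> Prop) (C : op V) (delta b1 b2 : R) :
  is_hilbert ip ->
  (0 < d)%N ->
  (* (i) *)
  (forall i j, closed_op ip (F i j)) ->
  (* (ii) *)
  (forall i j, i != ord0 -> j != ord0 ->
     [/\ bounded ip (Sm i j), (forall u, dom (F i j) u) &
         forall u, app (F i j) u = Sm i j u - (if i == j then u else 0)]) ->
  (forall i j, i != ord0 -> j != ord0 -> forall u,
     \sum_(k < d.+1 | k != ord0) app (adj ip (tot (Sm k i))) (Sm k j u)
       = (if i == j then u else 0)) ->
  (forall i j, i != ord0 -> j != ord0 -> forall u,
     \sum_(k < d.+1 | k != ord0) Sm i k (app (adj ip (tot (Sm j k))) u)
       = (if i == j then u else 0)) ->
  (* (iii) *)
  subspace D -> dense ip D ->
  is_core ip D (F ord0 ord0) ->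
  (forall i, i != ord0 -> is_core ip D (F i ord0) /\ is_core ip D (F ord0 i)) ->
  subspace Dt -> dense ip Dt ->
  is_core ip Dt (adj ip (F ord0 ord0)) ->
  (forall i, i != ord0 ->
     is_core ip Dt (adj ip (F i ord0)) /\ is_core ip Dt (adj ip (F ord0 i))) ->
  (* (iv) *)
  (forall i, i != ord0 ->
     [/\ subsetV (fun u => D u \/ Dt u) (dom (adj ip (F ord0 i))),
         subsetV (fun u => D u \/ Dt u) (dom (F i ord0)) &
         subsetV (dom (F ord0 ord0)) (dom (F ord0 i))]) ->
  (* (v) *)
  (forall k i, k != ord0 -> i != ord0 -> forall u,
     dom (F ord0 ord0) u -> dom (adj ip (F k ord0)) (Sm k i u)) ->
  (* (vi) *)
  contraction_generator ip (F ord0 ord0) ->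
  contraction_generator ip (adj ip (F ord0 ord0)) ->
  (forall u, D u ->
     2 * complex.Re (ip (app (F ord0 ord0) u) u)
       = - \sum_(k < d.+1 | k != ord0) hnorm ip (app (F k ord0) u) ^+ 2) ->
  (forall v, Dt v ->
     2 * complex.Re (ip (app (adj ip (F ord0 ord0)) v) v)
       = - \sum_(k < d.+1 | k != ord0) hnorm ip (app (adj ip (F ord0 k)) v) ^+ 2) ->
  (* (vii) *)
  (forall i, i != ord0 -> forall u, D u \/ Dt u ->
     app (adj ip (F ord0 i)) u
       = - \sum_(k < d.+1 | k != ord0) app (adj ip (tot (Sm k i))) (app (F k ord0) u)) ->
  (* (viii) *)
  pos_self_adjoint ip C -> 0 < delta -> 0 <= b1 -> 0 <= b2 ->
  (exists B, is_sqrt ip B C /\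
     subsetV (dom B) (fun u => forall i j, dom (F i j) u)) ->
  (forall eps : R, 0 < eps -> eps < delta ->
     exists (De : V -> Prop) (B : op V),
     [/\ subspace De /\ dense ip De, subsetV De Dt,
         is_sqrt ip B (Ceps C eps),
         (forall v, De v -> Dt (app B v)) &
         forall i j, exists M : R, forall v, De v ->
           hnorm ip (app (adj ip (F i j)) (app B v)) <= M * hnorm ip v]) ->
  (forall eps : R, 0 < eps -> eps < delta -> forall u : 'I_d.+1 -> V,
     (forall i i' j', dom (F i' j') (u i)) ->
     \sum_(i < d.+1) \sum_(j < d.+1)
        (ip (u i) (app (Ceps C eps) (app (F i j) (u j)))
         + ip (app (F j i) (u i)) (app (Ceps C eps) (u j))
         + \sum_(k < d.+1 | k != ord0)
             ip (app (F k i) (u i)) (app (Ceps C eps) (app (F k j) (u j))))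
     <= \sum_(i < d.+1)
          (b1%:C * ip (u i) (app (Ceps C eps) (u i)) + (b2 * hnorm ip (u i) ^+ 2)%:C)) ->
  [/\
   (* (1) *)
   (forall k, k != ord0 ->
      subsetV (fun u => dom (F ord0 ord0) u \/ dom (adj ip (F ord0 ord0)) u)
              (dom (F k ord0)) /\
      subsetV (fun u => dom (F ord0 ord0) u \/ dom (adj ip (F ord0 ord0)) u)
              (dom (adj ip (F ord0 k)))),
   (* (2) *)
   [/\ (forall u, (forall i j, dom (F i j) u) <-> dom (F ord0 ord0) u),
       (forall u, dom (F ord0 ord0) u ->
          2 * complex.Re (ip (app (F ord0 ord0) u) u)
            = - \sum_(k < d.+1 | k != ord0) hnorm ip (app (F k ord0) u) ^+ 2) &
       (forall v, dom (adj ip (F ord0 ord0)) v ->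
          2 * complex.Re (ip (app (adj ip (F ord0 ord0)) v) v)
            = - \sum_(k < d.+1 | k != ord0) hnorm ip (app (adj ip (F ord0 k)) v) ^+ 2)],
   (* (3) *)
   (forall u i, dom (F ord0 ord0) u \/ dom (adj ip (F ord0 ord0)) u -> i != ord0 ->
      app (adj ip (F ord0 i)) u
        = - \sum_(k < d.+1 | k != ord0) app (adj ip (tot (Sm k i))) (app (F k ord0) u)
      /\ app (F i ord0) u
        = - \sum_(k < d.+1 | k != ord0) Sm i k (app (adj ip (F ord0 k)) u)),
   (* (4) *)
   (forall u i, dom (F ord0 ord0) u -> i != ord0 ->
      app (F ord0 i) u
        = - \sum_(k < d.+1 | k != ord0) app (adj ip (F k ord0)) (Sm k i u)) &
   (* (5) *)
   (forall u v : 'I_d.+1 -> V,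
      (forall i i' j', dom (F i' j') (u i)) -> (forall i, Dt (v i)) ->
      \sum_(i < d.+1) \sum_(j < d.+1)
        (ip (u i) (app (F i j) (u j)) + ip (app (F j i) (u i)) (u j)
         + \sum_(k < d.+1 | k != ord0) ip (app (F k i) (u i)) (app (F k j) (u j))) = 0
      /\
      \sum_(i < d.+1) \sum_(j < d.+1)
        (ip (v i) (app (adj ip (F j i)) (v j)) + ip (app (adj ip (F i j)) (v i)) (v j)
         + \sum_(k < d.+1 | k != ord0)
             ip (app (adj ip (F i k)) (v i)) (app (adj ip (F j k)) (v j))) = 0)].
Proof.
move=> [ip_inner ip_complete _] _ *.
split.
- by move=> k k0; apply: (dom_R_Nadj ip_inner ip_complete (S := Sm) (D := D) (Dt := Dt)).
- split=> [u|u Ku|v Kv].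
  + exact: (dom_F ip_inner ip_complete (S := Sm) (D := D) (Dt := Dt)).
  + exact: (K_dissipative_dom ip_inner ip_complete (S := Sm) (D := D) (Dt := Dt)).
  + exact: (Kadj_dissipative_dom ip_inner ip_complete (S := Sm) (D := D) (Dt := Dt)).
- move=> u i Ku i0; split.
  + exact: (Nadj_S_R_dom ip_inner ip_complete (S := Sm) (D := D) (Dt := Dt)).
  + exact: (R_S_Nadj_dom ip_inner ip_complete (S := Sm) (D := D) (Dt := Dt)).
- exact: (N_Radj_S ip_inner ip_complete (S := Sm) (D := D) (Dt := Dt)).
- move=> u v u_dom v_Dt; split.
  + exact: (block_form_F ip_inner ip_complete (S := Sm) (D := D) (Dt := Dt)).
  + exact: (block_form_Fadj ip_inner ip_complete (S := Sm) (D := D) (Dt := Dt)).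
Qed.
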